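(* Let $\Gamma\le\mathrm{Iso}(\mathbb{R}^{r,s})$ be a subgroup whose centralizer in $\mathrm{Iso}(\mathbb{R}^{r,s})$ has an open orbit in $\mathbb{R}^{r,s}$, let $U_0=U_\Gamma\cap U_\Gamma^\perp$, $k=\dim U_0$, $n=r+s$, and fix a Witt basis with respect to $U_0$. Then for every $\gamma=(I+A,v)\in\Gamma$ the matrix of $A$ in this basis has the block form $$A=\begin{pmatrix}0&-B^\top\tilde I&C\\0&0&B\\0&0&0\end{pmatrix}$$ with $B\in\mathbb{R}^{(n-2k)\times k}$ and $C\in\mathbb{R}^{k\times k}$ skew-symmetric. Moreover $B^\top\tilde I B=0$, i.e. the columns of $B$ are isotropic and mutually orthogonal with respect to $\tilde I$.
   Context: $\mathbb{R}^{r,s}$ denotes $\mathbb{R}^{n}$, $n=r+s$, with a nondegenerate symmetric bilinear form $\langle\cdot,\cdot\rangle$ of signature $(r,s)$; $\mathrm{Iso}(\mathbb{R}^{r,s})$ is its group of affine isometries, whose elements are written $\gamma=(I+A,v)\colon x\mapsto(I+A)x+v$. $U_\Gamma=\sum_{(I+A,v)\in\Gamma}\operatorname{im}A$, and $U_0=U_\Gamma\cap U_\Gamma^\perp$ is totally isotropic. A Witt basis with respect to $U_0$ ($k=\dim U_0$) is a basis $u_1,\dots,u_k,w_1,\dots,w_{n-2k},u_1^*,\dots,u_k^*$ of $\mathbb{R}^{r,s}$ such that $u_1,\dots,u_k$ is a basis of $U_0$, $w_1,\dots,w_{n-2k}$ is a basis of a nondegenerate subspace $W$ with $U_0^\perp=U_0\oplus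 W$, and $u_1^*,\dots,u_k^*$ span a totally isotropic subspace $U_0^*$ orthogonal to $W$ with $\langle u_i,u_j^*\rangle=\delta_{ij}$. $\tilde I$ is the (diagonal signature) matrix of the restriction of $\langle\cdot,\cdot\rangle$ to $W$ in the basis $w_1,\dots,w_{n-2k}$. Known facts (Wolf) for such $\Gamma$: every $(I+A,v)\in\Gamma$ satisfies $A^2=0$, $Av=0$, $\langle Ax,y\rangle=-\langle x,Ay\rangle$, $\ker A=(\operatorname{im}A)^\perp$; for $\gamma_i=(I+A_i,v_i)\in\Gamma$ one has $A_1A_2A_3=0$ and $[\gamma_1,\gamma_2]=(I+2A_1A_2,2A_1v_2)$. *)

From HB Require Import structures.
From Stdlib Require Import Reals ClassicalEpsilon FunctionalExtensionality.
From mathcomp Require Import all_boot all_order all_algebra.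
Set Implicit Arguments. Unset Strict Implicit. Unset Printing Implicit Defensive.
Import Order.TTheory GRing.Theory Num.Theory.

Definition Reqb (x y : R) : bool := if Req_EM_T x y then true else false.
Lemma ReqbP : Equality.axiom Reqb.
Proof. by move=> x y; rewrite /Reqb; case: Req_EM_T => h; constructor. Qed.
HB.instance Definition _ := hasDecEq.Build R ReqbP.

Definition Rfind (P : pred R) (_ : nat) : option R :=
  match excluded_middle_informative (exists x, P x) with
  | left h => Some (proj1_sig (constructive_indefinite_description _ h))
  | right _ => None
  end.
Lemma Rfind_some P n x : Rfind P n = Some x -> P x.
Proof.
rewrite /Rfind; case: excluded_middle_informative => // h [<-].
exact: proj2_sig (constructive_indefinite_description _ h).
Qed.
Lemma Rfind_ex (P : pred R) : (exists x, P x) -> exists n, Rfind P n.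
Proof. by move=> h; exists 0%N; rewrite /Rfind; case: excluded_middle_informative. Qed.
Lemma Rfind_ext (P Q : pred R) : P =1 Q -> Rfind P =1 Rfind Q.
Proof. by move=> h; have -> : P = Q by apply: functional_extensionality. Qed.
HB.instance Definition _ := hasChoice.Build R Rfind_some Rfind_ex Rfind_ext.

Lemma R_addA : associative Rplus. Proof. by move=> *; rewrite Rplus_assoc. Qed.
Lemma R_addC : commutative Rplus. Proof. exact: Rplus_comm. Qed.
Lemma R_add0 : left_id R0 Rplus. Proof. exact: Rplus_0_l. Qed.
Lemma R_addN : left_inverse R0 Ropp Rplus. Proof. exact: Rplus_opp_l. Qed.
HB.instance Definition _ := GRing.isZmodule.Build R R_addA R_addC R_add0 R_addN.

Lemma R_mulA : associative Rmult. Proof. by move=> *; rewrite Rmult_assoc. Qed.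
Lemma R_mulC : commutative Rmult. Proof. exact: Rmult_comm. Qed.
Lemma R_mul1 : left_id R1 Rmult. Proof. exact: Rmult_1_l. Qed.
Lemma R_mulDl : left_distributive Rmult Rplus. Proof. exact: Rmult_plus_distr_r. Qed.
Lemma R_one_neq0 : R1 != R0. Proof. by apply/ReqbP; exact: R1_neq_R0. Qed.
HB.instance Definition _ := GRing.Zmodule_isComNzRing.Build R R_mulA R_mulC R_mul1 R_mulDl R_one_neq0.

Local Open Scope ring_scope.
Definition Rinvx (x : R) : R := if Reqb x 0 then 0 else Rinv x.
Lemma R_mulVf (x : R) : x != 0 -> Rinvx x * x = 1.
Proof.
move=> hx; rewrite /Rinvx; have -> : Reqb x 0 = false by apply/negP; move/ReqbP => e; move: hx; rewrite e eqxx.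
by apply: Rinv_l => e; move: hx; rewrite e eqxx.
Qed.
Lemma R_inv0 : Rinvx 0 = 0.
Proof. by rewrite /Rinvx; have -> : Reqb 0 0 = true by exact/ReqbP. Qed.
HB.instance Definition _ := GRing.ComNzRing_isField.Build R R_mulVf R_inv0.

Definition Rleb (x y : R) : bool := if Rle_dec x y then true else false.
Definition Rltb (x y : R) : bool := if Rlt_dec x y then true else false.
Lemma RlebP x y : reflect (Rle x y) (Rleb x y).
Proof. by rewrite /Rleb; case: Rle_dec => h; constructor. Qed.
Lemma RltbP x y : reflect (Rlt x y) (Rltb x y).
Proof. by rewrite /Rltb; case: Rlt_dec => h; constructor. Qed.

Lemma R_le0_add (x y : R) : Rleb 0 x -> Rleb 0 y -> Rleb 0 (x + y).
Proof. move=> /RlebP hx /RlebP hy; apply/RlebP; exact: Rplus_le_le_0_compat. Qed.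
Lemma R_le0_mul (x y : R) : Rleb 0 x -> Rleb 0 y -> Rleb 0 (x * y).
Proof. move=> /RlebP hx /RlebP hy; apply/RlebP; exact: Rmult_le_pos. Qed.
Lemma R_le0_anti (x : R) : Rleb 0 x -> Rleb x 0 -> x = 0.
Proof. move=> /RlebP hx /RlebP hy; exact: Rle_antisym. Qed.
Lemma R_sub_ge0 (x y : R) : Rleb 0 (y - x) = Rleb x y.
Proof.
apply/RlebP/RlebP => h.
- have := Rplus_le_compat_l x _ _ h.
  by rewrite /GRing.add /GRing.opp /= Rplus_0_r Rplus_comm Rplus_assoc Rplus_opp_l Rplus_0_r.
- have := Rplus_le_compat_r (- x)%R _ _ h.
  by rewrite Rplus_opp_r.
Qed.
Lemma R_le0_total (x : R) : Rleb 0 x || Rleb x 0.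
Proof.
case: (Rle_lt_dec 0 x) => h; first by apply/orP; left; apply/RlebP.
by apply/orP; right; apply/RlebP; apply: Rlt_le.
Qed.
Lemma R_normN (x : R) : Rabs (- x) = Rabs x.
Proof. exact: Rabs_Ropp. Qed.
Lemma R_ge0_norm (x : R) : Rleb 0 x -> Rabs x = x.
Proof. by move/RlebP; exact: Rabs_pos_eq. Qed.
Lemma R_lt_def (x y : R) : Rltb x y = (y != x) && Rleb x y.
Proof.
apply/RltbP/andP => [h|[/eqP hne /RlebP hle]].
- split; last by apply/RlebP; apply: Rlt_le.
  by apply/eqP => e; move: h; rewrite e; apply: Rlt_irrefl.
- case: (Rle_lt_or_eq_dec _ _ hle) => // e; by case: hne.
Qed.
HB.instance Definition _ := Num.IntegralDomain_isLeReal.Build R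
  R_le0_add R_le0_mul R_le0_anti R_sub_ge0 R_le0_total R_normN R_ge0_norm R_lt_def.


Unset Implicit Arguments.
Local Open Scope ring_scope.

Definition sig_mx (r s : nat) : 'M[R]_(r + s) :=
  diag_mx (\row_(i < r + s) (if (i < r)%N then 1 else -1)).

Definition form (r s : nat) (x y : 'cV[R]_(r + s)) : R :=
  (x^T *m sig_mx r s *m y) 0 0.

(* affine maps x |-> M x + v, written as pairs (M, v) *)
Definition aff (n : nat) := ('M[R]_n * 'cV[R]_n)%type.
Definition aff_app (n : nat) (g : aff n) (x : 'cV[R]_n) : 'cV[R]_n := g.1 *m x + g.2.
Definition aff_id (n : nat) : aff n := (1%:M, 0).
Definition aff_comp (n : nat) (g h : aff n) : aff n := (g.1 *m h.1, g.1 *m h.2 + g.2).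
Definition aff_inv (n : nat) (g : aff n) : aff n := (invmx g.1, - (invmx g.1 *m g.2)).

Definition is_iso (r s : nat) (g : aff (r + s)) : Prop :=
  g.1^T *m sig_mx r s *m g.1 = sig_mx r s.

Definition is_iso_subgroup (r s : nat) (Gam : aff (r + s) -> Prop) : Prop :=
  [/\ forall g, Gam g -> is_iso r s g,
      Gam (aff_id (r + s)),
      forall g h, Gam g -> Gam h -> Gam (aff_comp _ g h)
    & forall g, Gam g -> Gam (aff_inv _ g)].

Definition centralizer (r s : nat) (Gam : aff (r + s) -> Prop) : aff (r + s) -> Prop :=
  fun g => is_iso r s g /\ forall h, Gam h -> aff_comp _ g h = aff_comp _ h g.

Definition orbit (n : nat) (H : aff n -> Prop) (x : 'cV[R]_n) : 'cV[R]_n -> Prop :=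
  fun y => exists g, H g /\ y = aff_app _ g x.

Definition is_open (n : nat) (S : 'cV[R]_n -> Prop) : Prop :=
  forall y, S y -> exists2 e : R, 0 < e &
    forall z : 'cV[R]_n, (forall i, `|z i 0 - y i 0| < e) -> S z.

Definition has_open_orbit (n : nat) (H : aff n -> Prop) : Prop :=
  exists x, is_open n (orbit n H x).

(* gamma = (I + A, v)  |->  A *)
Definition lin_part (n : nat) (g : aff n) : 'M[R]_n := g.1 - 1%:M.

(* U_Gamma = sum over gamma in Gamma of im A *)
Definition U_Gamma (r s : nat) (Gam : aff (r + s) -> Prop) : 'cV[R]_(r + s) -> Prop :=
  fun x => exists l : seq (aff (r + s) * 'cV[R]_(r + s)),
    (forall p, p \in l -> Gam p.1) /\
    x = \sum_(p <- l) lin_part _ p.1 *m p.2.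

Definition perp (r s : nat) (U : 'cV[R]_(r + s) -> Prop) : 'cV[R]_(r + s) -> Prop :=
  fun x => forall y, U y -> form r s x y = 0.

Definition U0 (r s : nat) (Gam : aff (r + s) -> Prop) : 'cV[R]_(r + s) -> Prop :=
  fun x => U_Gamma r s Gam x /\ perp r s (U_Gamma r s Gam) x.

Definition span (n : nat) (I : finType) (f : I -> 'cV[R]_n) : 'cV[R]_n -> Prop :=
  fun x => exists c : I -> R, x = \sum_i c i *: f i.

Definition lin_indep (n : nat) (I : finType) (f : I -> 'cV[R]_n) : Prop :=
  forall c : I -> R, \sum_i c i *: f i = 0 -> forall i, c i = 0.

Definition basis_of (n : nat) (I : finType) (S : 'cV[R]_n -> Prop) (f : I -> 'cV[R]_n) : Prop :=
  lin_indep n I f /\ forall x, S x <-> span n I f x.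

Definition witt_family (n k m : nat) (u : 'I_k -> 'cV[R]_n) (w : 'I_m -> 'cV[R]_n)
  (us : 'I_k -> 'cV[R]_n) : ('I_k + 'I_m + 'I_k)%type -> 'cV[R]_n :=
  fun i => match i with
           | inl (inl a) => u a
           | inl (inr b) => w b
           | inr c => us c
           end.

Definition is_witt_basis (r s : nat) (U : 'cV[R]_(r + s) -> Prop) (k m : nat)
  (u : 'I_k -> 'cV[R]_(r + s)) (w : 'I_m -> 'cV[R]_(r + s))
  (us : 'I_k -> 'cV[R]_(r + s)) : Prop :=
  basis_of _ _ (fun _ => True) (witt_family _ k m u w us) /\
  basis_of _ _ U u /\
  (forall x, span _ _ w x -> (forall y, span _ _ w y -> form r s x y = 0) -> x = 0) /\
  (forall x, perp r s U x <-> exists y z, U y /\ span _ _ w z /\ x = y + z) /\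
  (forall x, U x -> span _ _ w x -> x = 0) /\
  (forall x y, span _ _ us x -> span _ _ us y -> form r s x y = 0) /\
  (forall x y, span _ _ us x -> span _ _ w y -> form r s x y = 0) /\
  (forall i j, form r s (u i) (us j) = (i == j)%:R).

Definition Itilde (r s m : nat) (w : 'I_m -> 'cV[R]_(r + s)) : 'M[R]_m :=
  \matrix_(i, j) form r s (w i) (w j).

From Pilot Require Import Defs.
From HB Require Import structures.
From Stdlib Require Import Reals ClassicalEpsilon.
From mathcomp Require Import all_boot all_order all_algebra.
From mathcomp Require Import ring lra.
Import Order.TTheory GRing.Theory Num.Theory.
Set Implicit Arguments. Unset Strict Implicit. Unset Printing Implicit Defensive.
Local Open Scope ring_scope.
Local Notation form := Defs.form.
Local Notation span := Defs.span.
Local Notation orbit := Defs.orbit.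

(* Proof plan.
   1. <.,.> is a symmetric, bilinear, nondegenerate form preserved by every
      linear isometry.
   2. If the centralizer of Gam has an open orbit O, then for g1, g2 in Gam
      the quantity <g1 z - z, g2 z - z> is constant on O (elements of the
      centralizer are isometries commuting with g1, g2).  Comparing z = x0 + h
      and z = x0 - h gives <A1 h, A2 h> = 0 for small h, hence for all h by
      homogeneity: this "cross isotropy" is the only use of the open orbit.
   3. From cross isotropy and the isometry condition we recover Wolf's facts:
      A is skew for <.,.>, A1 A2 = - A2 A1 and A1 A2 A3 = 0.
   4. Consequently A kills U0, maps U0^perp into U0 and maps everything into
      U0^perp.  Reading off coordinates in the Witt basis (using that
      <., us_i> extracts the u_i-coordinate of a vector of U0^perp) gives the
      block form, the skew-symmetry of C and the identity B^T I~ B = 0. *)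

Lemma sig_mx_tr (r s : nat) : (sig_mx r s)^T = sig_mx r s.
Proof. by rewrite /sig_mx tr_diag_mx. Qed.

(* J is an involution, which makes the form nondegenerate. *)
Lemma sig_mx_invol (r s : nat) : sig_mx r s *m sig_mx r s = 1%:M.
Proof.
apply/matrixP=> i j; rewrite /sig_mx mul_diag_mx !mxE.
case: eqP => [->|_]; last by rewrite mulr0.
by case: ifP => _; rewrite mulr1n ?mulrNN mulr1.
Qed.

Lemma form_sym r s x y : form r s x y = form r s y x.
Proof.
have E (M : 'M[R]_1) : M 0 0 = M^T 0 0 by rewrite mxE.
by rewrite /Defs.form E !trmx_mul trmxK sig_mx_tr mulmxA.
Qed.

Lemma formDr r s x y z : form r s x (y + z) = form r s x y + form r s x z.
Proof. by rewrite /form mulmxDr mxE. Qed.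
Lemma formZr r s x a y : form r s x (a *: y) = a * form r s x y.
Proof. by rewrite /form -scalemxAr mxE. Qed.
Lemma formNr r s x y : form r s x (- y) = - form r s x y.
Proof. by rewrite /form mulmxN mxE. Qed.
Lemma formBr r s x y z : form r s x (y - z) = form r s x y - form r s x z.
Proof. by rewrite formDr formNr. Qed.
Lemma form_sumr r s x (I : Type) (l : seq I) (P : pred I) (f : I -> 'cV_(r + s)) :
  form r s x (\sum_(i <- l | P i) f i) = \sum_(i <- l | P i) form r s x (f i).
Proof. by rewrite /form mulmx_sumr summxE. Qed.
Lemma form0r r s x : form r s x 0 = 0.
Proof. by rewrite /form mulmx0 mxE. Qed.

Lemma formDl r s x y z : form r s (y + z) x = form r s y x + form r s z x.
Proof. by rewrite !(form_sym _ x) formDr. Qed.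
Lemma formZl r s x a y : form r s (a *: y) x = a * form r s y x.
Proof. by rewrite !(form_sym _ x) formZr. Qed.
Lemma formNl r s x y : form r s (- y) x = - form r s y x.
Proof. by rewrite !(form_sym _ x) formNr. Qed.
Lemma formBl r s x y z : form r s (y - z) x = form r s y x - form r s z x.
Proof. by rewrite !(form_sym _ x) formBr. Qed.
Lemma form_suml r s x (I : Type) (l : seq I) (P : pred I) (f : I -> 'cV_(r + s)) :
  form r s (\sum_(i <- l | P i) f i) x = \sum_(i <- l | P i) form r s (f i) x.
Proof. by rewrite form_sym form_sumr; apply: eq_bigr => i _; rewrite form_sym. Qed.
Lemma form0l r s x : form r s 0 x = 0.
Proof. by rewrite form_sym form0r. Qed.

(* Nondegeneracy: pairing x with J x gives the Euclidean norm of x. *)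
Lemma form_nondeg r s x : (forall y, form r s x y = 0) -> x = 0.
Proof.
move=> h; have := h (sig_mx r s *m x).
rewrite /Defs.form mulmxA -(mulmxA x^T) sig_mx_invol mulmx1 mxE => e.
have : \sum_j (x j 0) ^+ 2 = 0.
  by rewrite -[RHS]e; apply: eq_bigr => j _; rewrite mxE expr2.
move/eqP; rewrite psumr_eq0; last by move=> j _; exact: sqr_ge0.
move/allP=> H; apply/matrixP => i j; rewrite (ord1 j) mxE.
by have := H i (mem_index_enum _); rewrite /= sqrf_eq0 => /eqP.
Qed.

Lemma form_iso r s (L : 'M[R]_(r + s)) x y :
  L^T *m sig_mx r s *m L = sig_mx r s -> form r s (L *m x) (L *m y) = form r s x y.
Proof.
move=> h; rewrite /form trmx_mul -!mulmxA (mulmxA L^T) (mulmxA (L^T *m _)) h.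
by rewrite !mulmxA.
Qed.

(* If the quadratic form h |-> <M1 h, M2 h> vanishes on a sup-norm ball
   around 0, it vanishes identically (rescale h into the ball). *)
Lemma quad_zero_of_local r s (M1 M2 : 'M[R]_(r + s)) (e : R) : 0 < e ->
  (forall h : 'cV[R]_(r + s),
     (forall i, `|h i 0| < e) -> form r s (M1 *m h) (M2 *m h) = 0) ->
  forall h, form r s (M1 *m h) (M2 *m h) = 0.
Proof.
move=> e0 small h.
set S := \sum_i `|h i 0|.
have hS i : `|h i 0| <= S by rewrite /S (bigD1 i) //= lerDl sumr_ge0.
have S0 : 0 <= S by apply: sumr_ge0 => i _; exact: normr_ge0.
have d0 : 0 < 2 * (S + 1) by lra.
set t := e / (2 * (S + 1)).
have t0 : 0 < t by rewrite /t divr_gt0.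
have th_small i : `|(t *: h) i 0| < e.
  rewrite mxE normrM (gtr0_norm t0) /t mulrAC ltr_pdivrMr //.
  by rewrite ltr_pM2l //; have := hS i; lra.
clearbody t; have := small _ th_small; rewrite -!scalemxAr formZl formZr.
by move/eqP; rewrite !mulf_eq0 (gt_eqF t0) /= => /eqP.
Qed.

Lemma lin_partE n (g : aff n) (x : 'cV[R]_n) : lin_part n g *m x = g.1 *m x - x.
Proof. by rewrite /lin_part mulmxBl mul1mx. Qed.

Lemma disp_comm n (g L : aff n) (x : 'cV[R]_n) :
  aff_comp n L g = aff_comp n g L ->
  aff_app n g (aff_app n L x) - aff_app n L x = L.1 *m (aff_app n g x - x).
Proof.
case: L => L c; rewrite /aff_comp /aff_app /= => -[e1 e2].
have e3 : L *m g.2 = g.1 *m c + g.2 - c by rewrite -e2 addrK.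
rewrite !mulmxDr !mulmxN !mulmxA e1 e3.
move: (g.1 *m L *m x) (g.1 *m c) g.2 (L *m x) => a b d f.
by apply/matrixP=> i j; rewrite !mxE; ring.
Qed.

Lemma disp_shift n (g : aff n) (x h : 'cV[R]_n) :
  aff_app n g (x + h) - (x + h) = (aff_app n g x - x) + lin_part n g *m h.
Proof.
rewrite lin_partE /aff_app mulmxDr.
move: (g.1 *m x) (g.1 *m h) g.2 => a b d.
by apply/matrixP=> i j; rewrite !mxE; ring.
Qed.

Lemma lin_part_comp n (g h : aff n) (z : 'cV[R]_n) :
  lin_part n (aff_comp n g h) *m z =
  lin_part n g *m z + lin_part n h *m z + lin_part n g *m (lin_part n h *m z).
Proof.
rewrite !lin_partE /aff_comp /= !mulmxBr -mulmxA.
move: (g.1 *m (h.1 *m z)) (g.1 *m z) (h.1 *m z) => a b c.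
by apply/matrixP=> i j; rewrite !mxE; ring.
Qed.

Definition cross_isotropic (r s : nat) (Gam : aff (r + s) -> Prop) : Prop :=
  forall g1 g2, Gam g1 -> Gam g2 ->
  forall h, form r s (lin_part _ g1 *m h) (lin_part _ g2 *m h) = 0.

Lemma disp_form_orbit r s Gam (g1 g2 : aff (r + s)) x0 z :
  Gam g1 -> Gam g2 -> orbit _ (centralizer r s Gam) x0 z ->
  form r s (aff_app _ g1 z - z) (aff_app _ g2 z - z) =
  form r s (aff_app _ g1 x0 - x0) (aff_app _ g2 x0 - x0).
Proof.
by move=> G1 G2 [L [[isoL comm] ->]]; rewrite !disp_comm ?comm // form_iso.
Qed.

Lemma orbit_self n (H : aff n -> Prop) x : H (aff_id n) -> orbit n H x x.
Proof. by move=> Hid; exists (aff_id n); rewrite /aff_app /= mul1mx addr0. Qed.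

Lemma id_centralizer r s Gam : centralizer r s Gam (aff_id (r + s)).
Proof.
split; first by rewrite /is_iso /aff_id /= trmx1 mulmx1 mul1mx.
move=> h _; rewrite /aff_comp /aff_id /=.
by rewrite mul1mx mulmx1 mul1mx mulmx0 add0r addr0.
Qed.

Lemma open_orbit_cross_isotropic r s (Gam : aff (r + s) -> Prop) :
  has_open_orbit _ (centralizer r s Gam) -> cross_isotropic Gam.
Proof.
move=> [x0 Hopen] g1 g2 G1 G2.
have [e e0 Hball] := Hopen x0 (orbit_self x0 (id_centralizer Gam)).
apply: quad_zero_of_local e0 _ => h small.
have in_ball (v : 'cV[R]_(r + s)) : (forall i, `|v i 0| < e) ->
    orbit _ (centralizer r s Gam) x0 (x0 + v).
  by move=> sv; apply: Hball => i; rewrite !mxE addrAC subrr add0r.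
have E1 := disp_form_orbit G1 G2 (in_ball h small).
have small_opp i : `|(- h) i 0| < e by rewrite mxE normrN.
have E2 := disp_form_orbit G1 G2 (in_ball _ small_opp).
rewrite !disp_shift !mulmxN !formDl !formDr !formNl !formNr in E1 E2.
lra.
Qed.

Section WolfIdentities.
Variables (r s : nat) (Gam : aff (r + s) -> Prop).
Hypothesis Hsub : is_iso_subgroup r s Gam.
Hypothesis Hcross : cross_isotropic Gam.
Local Notation A g := (lin_part (r + s) g).

Lemma cross_polar g1 g2 (x y : 'cV[R]_(r + s)) : Gam g1 -> Gam g2 ->
  form r s (A g1 *m x) (A g2 *m y) + form r s (A g1 *m y) (A g2 *m x) = 0.
Proof.
move=> G1 G2; have := Hcross G1 G2 (x + y).
by rewrite !mulmxDr !formDl !formDr !Hcross // add0r addr0.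
Qed.

Lemma im_isotropic g (x y : 'cV[R]_(r + s)) : Gam g ->
  form r s (A g *m x) (A g *m y) = 0.
Proof.
move=> G; have := cross_polar x y G G.
by rewrite (form_sym (_ *m y)) => /eqP; rewrite -mulr2n mulrn_eq0 => /eqP.
Qed.

(* A is skew: expand the isometry condition for I + A. *)
Lemma lin_part_skew g (x y : 'cV[R]_(r + s)) : Gam g ->
  form r s (A g *m x) y = - form r s x (A g *m y).
Proof.
case: Hsub => Hiso _ _ _ G.
have := form_iso x y (Hiso g G).
have E (z : 'cV[R]_(r + s)) : g.1 *m z = z + A g *m z.
  by rewrite lin_partE addrC subrK.
rewrite !E !formDl !formDr (im_isotropic _ _ G) => e; lra.
Qed.

Lemma lin_part_anticomm g1 g2 (x : 'cV[R]_(r + s)) : Gam g1 -> Gam g2 ->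
  A g1 *m (A g2 *m x) = - (A g2 *m (A g1 *m x)).
Proof.
move=> G1 G2; apply/eqP; rewrite -addr_eq0; apply/eqP/form_nondeg => y.
rewrite formDl (lin_part_skew _ y G1) (lin_part_skew _ y G2) (form_sym (A g2 *m x)).
have := cross_polar x y G1 G2; lra.
Qed.

(* A1 A2 A3 = 0: anticommute A1 A2 (the linear part of g1 g2) with A3. *)
Lemma lin_part_triple g1 g2 g3 (x : 'cV[R]_(r + s)) :
  Gam g1 -> Gam g2 -> Gam g3 -> A g1 *m (A g2 *m (A g3 *m x)) = 0.
Proof.
move=> G1 G2 G3.
have G12 : Gam (aff_comp _ g1 g2) by case: Hsub => _ _ Hc _; exact: Hc.
have := lin_part_anticomm x G12 G3.
rewrite !lin_part_comp !mulmxDr (lin_part_anticomm _ G1 G3).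
rewrite (lin_part_anticomm _ G2 G3) !mulmxN (lin_part_anticomm (A g2 *m x) G3 G1).
move: (A g3 *m (A g1 *m x)) (A g3 *m (A g2 *m x)) (A g1 *m (A g3 *m (A g2 *m x))).
move=> a b c /matrixP E; apply/matrixP => i j; have := E i j; rewrite !mxE; lra.
Qed.

Lemma U_Gamma_im g (y : 'cV[R]_(r + s)) : Gam g -> U_Gamma r s Gam (A g *m y).
Proof.
move=> G; exists [:: (g, y)]; split; last by rewrite big_cons big_nil addr0.
by move=> p; rewrite inE => /eqP ->.
Qed.

(* A A' z = A'' z - A z - A' z with A'' the linear part of g g'. *)
Lemma U_Gamma_im2 g g' (z : 'cV[R]_(r + s)) : Gam g -> Gam g' ->
  U_Gamma r s Gam (A g *m (A g' *m z)).
Proof.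
case: Hsub => _ _ Hc _ G G'.
exists [:: (aff_comp _ g g', z); (g, - z); (g', - z)]; split.
  by move=> p; rewrite !inE => /orP [/eqP ->|/orP [/eqP ->|/eqP ->]] //=; exact: Hc.
rewrite !big_cons big_nil /= lin_part_comp !mulmxN.
move: (A g *m z) (A g' *m z) (A g *m (A g' *m z)) => a b c.
by apply/matrixP=> i j; rewrite !mxE; ring.
Qed.

Lemma perp_U_Gamma (x : 'cV[R]_(r + s)) :
  (forall g y, Gam g -> form r s x (A g *m y) = 0) -> perp r s (U_Gamma r s Gam) x.
Proof.
move=> h y [l [Hl ->]]; rewrite form_sumr big_seq big1 // => p pl.
exact: h (Hl p pl).
Qed.

Lemma U0_zero : U0 r s Gam 0.
Proof.
split; last by move=> y _; exact: form0l.
by exists [::]; split => //; rewrite big_nil.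
Qed.

Lemma U0_isotropic (x y : 'cV[R]_(r + s)) : U0 r s Gam x -> U0 r s Gam y ->
  form r s x y = 0.
Proof. by move=> [_ hx] [hy _]; exact: hx. Qed.

(* A kills U0 (= ker A contains (im A)^perp). *)
Lemma lin_part_U0 g (x : 'cV[R]_(r + s)) : Gam g -> U0 r s Gam x -> A g *m x = 0.
Proof.
move=> G [_ hx]; apply: form_nondeg => y.
by rewrite lin_part_skew // hx ?oppr0 //; exact: U_Gamma_im.
Qed.

Lemma im2_U0 g g' (z : 'cV[R]_(r + s)) : Gam g -> Gam g' ->
  U0 r s Gam (A g *m (A g' *m z)).
Proof.
move=> G G'; split; first exact: U_Gamma_im2.
apply: perp_U_Gamma => g'' y G''.
rewrite form_sym (lin_part_skew _ _ G'') (lin_part_triple _ G'' G G').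
by rewrite form_sym form0l oppr0.
Qed.

Lemma lin_part_perp_U0 g (x : 'cV[R]_(r + s)) : Gam g ->
  perp r s (U0 r s Gam) x -> U0 r s Gam (A g *m x).
Proof.
move=> G hx; split; first exact: U_Gamma_im.
apply: perp_U_Gamma => g' y G'.
by rewrite lin_part_skew // hx ?oppr0 //; exact: im2_U0.
Qed.

Lemma im_perp_U0 g (x : 'cV[R]_(r + s)) : Gam g ->
  perp r s (U0 r s Gam) (A g *m x).
Proof. by move=> G y hy; rewrite lin_part_skew // lin_part_U0 // form0r oppr0. Qed.

End WolfIdentities.

Lemma sum_delta (I : finType) (c : I -> R) i : \sum_a c a * (a == i)%:R = c i.
Proof.
rewrite (bigD1 i) //= eqxx mulr1 big1 ?addr0 // => a /negbTE ->.
by rewrite mulr0.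
Qed.

Lemma span_self n (I : finType) (f : I -> 'cV[R]_n) j : span n I f (f j).
Proof.
exists (fun i => (i == j)%:R); rewrite (bigD1 j) //= eqxx scale1r big1 ?addr0 //.
by move=> i /negbTE ->; rewrite scale0r.
Qed.

(* Only these properties of the Witt basis (u, w, us) are needed: u spans U0,
   U0^perp = U0 + span w, span us is orthogonal to span w, and
   <u_i, us_j> = delta_ij. *)
Section WittCoordinates.
Variables (r s : nat) (Gam : aff (r + s) -> Prop).
Hypothesis Hsub : is_iso_subgroup r s Gam.
Hypothesis Hcross : cross_isotropic Gam.
Variables (k m : nat) (u : 'I_k -> 'cV[R]_(r + s)) (w : 'I_m -> 'cV[R]_(r + s))
  (us : 'I_k -> 'cV[R]_(r + s)).
Hypothesis Hu : forall x, U0 r s Gam x <-> span _ _ u x.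
Hypothesis Hperp : forall x, perp r s (U0 r s Gam) x <->
  exists y z, U0 r s Gam y /\ span _ _ w z /\ x = y + z.
Hypothesis Hus_w : forall x y, span _ _ us x -> span _ _ w y -> form r s x y = 0.
Hypothesis Hdual : forall i j, form r s (u i) (us j) = (i == j)%:R.
Variables (g : aff (r + s)) (G : Gam g).
Local Notation A := (lin_part (r + s) g).
Local Notation It := (Itilde r s m w).

Lemma u_U0 j : U0 r s Gam (u j).
Proof. by apply/Hu; exact: span_self. Qed.

Lemma w_perp_U0 j : perp r s (U0 r s Gam) (w j).
Proof.
apply/Hperp; exists 0, (w j); rewrite add0r.
by split; [exact: U0_zero | split; [exact: span_self | done]].
Qed.

Lemma coord_us (c : 'I_k -> R) (d : 'I_m -> R) i :
  form r s (\sum_a c a *: u a + \sum_b d b *: w b) (us i) = c i.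
Proof.
rewrite formDl !form_suml [X in _ + X]big1 ?addr0; last first.
  by move=> b _; rewrite formZl form_sym Hus_w ?mulr0 //; exact: span_self.
by rewrite -(sum_delta c i); apply: eq_bigr => a _; rewrite formZl Hdual.
Qed.

(* A us_j lies in U0^perp = U0 + W: this defines the blocks C and B. *)
Lemma A_us_decomp : exists (B : 'M[R]_(m, k)) (C : 'M[R]_k),
  forall j, A *m us j = \sum_i C i j *: u i + \sum_i B i j *: w i.
Proof.
have D j : exists cd : ('I_k -> R) * ('I_m -> R),
    A *m us j = \sum_a cd.1 a *: u a + \sum_b cd.2 b *: w b.
  have /Hperp [y [z [/Hu [c ->] [[d ->] ->]]]] := im_perp_U0 Hsub Hcross (us j) G.
  by exists (c, d).
pose f j := proj1_sig (constructive_indefinite_description _ (D j)).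
exists (\matrix_(b, j) (f j).2 b), (\matrix_(i, j) (f j).1 i) => j.
under eq_bigr do rewrite mxE; under [X in _ + X]eq_bigr do rewrite mxE.
exact: proj2_sig (constructive_indefinite_description _ (D j)).
Qed.

Variables (B : 'M[R]_(m, k)) (C : 'M[R]_k).
Hypothesis HAus : forall j, A *m us j = \sum_i C i j *: u i + \sum_i B i j *: w i.

Lemma C_entry i j : C i j = form r s (A *m us j) (us i).
Proof. by rewrite HAus coord_us. Qed.

(* C is skew because A is skew. *)
Lemma C_skew : C^T = - C.
Proof.
apply/matrixP => i j; rewrite !mxE !C_entry.
by rewrite (lin_part_skew Hsub Hcross _ _ G) form_sym.
Qed.

Lemma W_part j : \sum_b B b j *: w b = A *m us j - \sum_a C a j *: u a.
Proof. by rewrite HAus addrAC subrr add0r. Qed.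

Lemma U_part_U0 j : U0 r s Gam (\sum_a C a j *: u a).
Proof. by apply/Hu; exists (C^~ j). Qed.

(* The W-parts of A us_i, A us_j are orthogonal: im A is isotropic and
   orthogonal to U0. *)
Lemma W_parts_orth i j :
  form r s (\sum_b B b i *: w b) (\sum_b B b j *: w b) = 0.
Proof.
rewrite !W_part formBl !formBr (im_isotropic Hcross _ _ G).
rewrite (im_perp_U0 Hsub Hcross _ G (U_part_U0 j)) (form_sym _ (A *m us j)).
rewrite (im_perp_U0 Hsub Hcross _ G (U_part_U0 i)).
by rewrite (U0_isotropic (U_part_U0 i) (U_part_U0 j)) !subrr.
Qed.

Lemma B_isotropic : B^T *m It *m B = 0.
Proof.
apply/matrixP => i j; rewrite [in RHS]mxE -(W_parts_orth i j) form_suml mxE.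
under eq_bigr => b _ do rewrite !mxE mulr_suml.
rewrite exchange_big /=; apply: eq_bigr => a _.
rewrite formZl form_sumr mulr_sumr; apply: eq_bigr => b _.
by rewrite /Itilde !mxE formZr; ring.
Qed.

Lemma A_u j : A *m u j = 0.
Proof. exact: (lin_part_U0 Hsub Hcross G (u_U0 j)). Qed.

(* A w_j lies in U0; its u_i-coordinate <A w_j, us_i> = - <w_j, A us_i>. *)
Lemma A_w j : A *m w j = \sum_i (- (B^T *m It)) i j *: u i.
Proof.
have [e he] : span _ _ u (A *m w j).
  by apply/Hu; exact: (lin_part_perp_U0 Hsub Hcross G (w_perp_U0 j)).
rewrite he; apply: eq_bigr => i _; congr (_ *: _).
have := coord_us e (fun _ => 0) i.
rewrite [X in _ + X]big1 ?addr0 => [|b _]; last by rewrite scale0r.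
rewrite -he => <-.
rewrite (lin_part_skew Hsub Hcross _ _ G) HAus formDr !form_sumr big1 ?add0r.
  rewrite !mxE; congr (- _); apply: eq_bigr => b _.
  by rewrite !mxE formZr form_sym.
by move=> a _; rewrite formZr w_perp_U0 ?mulr0 //; exact: u_U0.
Qed.

End WittCoordinates.

(* The matrix of A = lin_part _ g in the Witt basis (u, w, us) is
   [[0, -B^T I~, C], [0, 0, B], [0, 0, 0]]: its columns are the coordinates
   of A u_j, A w_j, A us_j respectively. *)
Theorem theorem4p4 (r s : nat) (Gam : aff (r + s) -> Prop) :
  is_iso_subgroup r s Gam ->
  has_open_orbit _ (centralizer r s Gam) ->
  forall (k m : nat) (u : 'I_k -> 'cV[R]_(r + s)) (w : 'I_m -> 'cV[R]_(r + s))
         (us : 'I_k -> 'cV[R]_(r + s)),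
  is_witt_basis r s (U0 r s Gam) k m u w us ->
  forall g : aff (r + s), Gam g ->
  exists (B : 'M[R]_(m, k)) (C : 'M[R]_k),
    [/\ C^T = - C,
        B^T *m Itilde r s m w *m B = 0,
        forall j, lin_part _ g *m u j = 0,
        forall j, lin_part _ g *m w j = \sum_i (- (B^T *m Itilde r s m w)) i j *: u i
      & forall j, lin_part _ g *m us j = \sum_i C i j *: u i + \sum_i B i j *: w i].
Proof.
move=> Hsub Hopen k m u w us [_ [[_ Hu] [_ [Hperp [_ [_ [Hus_w Hdual]]]]]]] g G.
have Hcross := open_orbit_cross_isotropic Hopen.
have [B [C HAus]] := A_us_decomp Hsub Hcross us Hu Hperp G.
exists B, C; split.
- exact (C_skew Hsub Hcross Hus_w Hdual G HAus).
- exact (B_isotropic Hsub Hcross Hu G HAus).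
- exact (A_u Hsub Hcross Hu G).
- exact (A_w Hsub Hcross Hu Hperp Hus_w Hdual G HAus).
- exact: HAus.
Qed.
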